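(* Let $G$ be a finite connected graph with $\chi(G)<0$ and no vertices of valence 1 or 2. If $\ell\in\mathcal M(G)$ satisfies $\mathfrak h_G(\ell)<1$, then $F_G(\ell)>0$.
   Context: $G$ has oriented edges $E$, involution $e\mapsto\bar e$, orientation $E_+$; $\mathcal M(G)=\mathbb R_{>0}^{|E_+|}$ is the set of length functions $\ell\colon E_+\to\mathbb R_{>0}$ (extended to $E$ by $\ell(\bar e)=\ell(e)$). Entropy $\mathfrak h_G(\ell)=\lim_{t\to\infty}\frac1t\log\#\{\text{based circuits }\gamma:\ell(\gamma)\le t\}$, where a based circuit is a reduced closed edge path $(e_1,\dots,e_n)$ with $e_{i+1}\ne\bar e_i$ and $e_n\neq\bar e_1$. $A_G$ is the $|E|\times|E|$ matrix with $A_G(e,e')=1$ if $\tau(e)=o(e')$ and $e'\ne\bar e$, else $0$; $A_{G,\ell}(e,e')=A_G(e,e')\exp(-\ell(e))$, and $F_G(\ell)=\det(I-A_{G,\ell})$. *)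

From HB Require Import structures.
From mathcomp Require Import all_boot all_order all_algebra.
From mathcomp Require Import all_classical all_reals all_analysis.
Set Implicit Arguments. Unset Strict Implicit. Unset Printing Implicit Defensive.
Import Order.TTheory GRing.Theory Num.Theory.
Import numFieldNormedType.Exports.
Local Open Scope classical_set_scope.
Local Open Scope ring_scope.

(* A finite graph in Serre's sense: vertices V, oriented edges E, origin and
   terminus maps, and a fixed-point-free involution e |-> bar e reversing edges.
   Loops and multiple edges are allowed. *)
Record graph := Graph {
  gV : finType;
  gE : finType;
  gorig : gE -> gV;
  gterm : gE -> gV;
  gbar : gE -> gE;
  gbarK : involutive gbar;
  gbar_neq : forall e, gbar e != e;
  gorig_bar : forall e, gorig (gbar e) = gterm e
}.

Section GraphDefs.
Variable G : graph.

(* valence of v: number of oriented edges with origin v (loops count twice) *)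
Definition valence (v : gV G) : nat := #|[set e : gE G | gorig e == v]|.

(* Euler characteristic |V| - |E_+| = |V| - |E|/2 *)
Definition euler_char : rat := (#|gV G|%:R - (#|gE G|%:R / 2))%R.

Definition adjacent : rel (gV G) :=
  fun u v => [exists e : gE G, (gorig e == u) && (gterm e == v)].

Definition connected_graph : Prop := forall u v : gV G, connect adjacent u v.

Variable R : realType.

(* M(G): length functions on E_+ extended to E by l(bar e) = l(e); equivalently
   positive functions on E invariant under bar. *)
Definition length_fun (l : gE G -> R) : Prop :=
  (forall e, 0 < l e) /\ (forall e, l (gbar e) = l e).

Definition based_circuit n (s : n.+1.-tuple (gE G)) : bool :=
  [forall i : 'I_n.+1,
     (gterm (tnth s i) == gorig (tnth s (ordS i)))
     && (tnth s (ordS i) != gbar (tnth s i))].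

Definition path_length (l : gE G -> R) n (s : n.+1.-tuple (gE G)) : R :=
  \sum_(i < n.+1) l (tnth s i).

Definition count_circuits (l : gE G -> R) (t : R) (n : nat) : nat :=
  #|[set s : n.+1.-tuple (gE G) | based_circuit s && (path_length l s <= t)]|.

(* total number of based circuits with length <= t (the series is eventually
   constant since l is bounded below by a positive constant) *)
Definition num_circuits (l : gE G -> R) (t : R) : R :=
  limn (fun m : nat => (\sum_(n < m) (count_circuits l t n)%:R : R)).

(* h_G(l) = lim_{t -> oo} (1/t) log #{based circuits gamma : l(gamma) <= t};
   we state "the limit exists and equals h". *)
Definition is_entropy (l : gE G -> R) (h : R) : Prop :=
  (fun t : R => ln (num_circuits l t) / t) @ +oo --> h.

Definition eidx (i : 'I_#|gE G|) : gE G := enum_val i.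

Definition A_G : 'M[R]_#|gE G| :=
  \matrix_(i, j) (if (gterm (eidx i) == gorig (eidx j)) && (eidx j != gbar (eidx i))
                  then 1 else 0).

Definition A_Gl (l : gE G -> R) : 'M[R]_#|gE G| :=
  \matrix_(i, j) (A_G i j * expR (- l (eidx i))).

Definition F_G (l : gE G -> R) : R := \det (1%:M - A_Gl l).

End GraphDefs.

From HB Require Import structures.
From mathcomp Require Import all_boot all_order all_algebra.
From mathcomp Require Import all_classical all_reals all_analysis.
From mathcomp Require Import zify ring lra.
Import Order.TTheory GRing.Theory Num.Theory.
Set Implicit Arguments. Unset Strict Implicit. Unset Printing Implicit Defensive.

(* Write A = A_{G,l}; it is a nonnegative matrix indexed by
   oriented edges, and F_G(l) = det (1 - A).
   1. Graph part: when no vertex has valence 1 or 2 and G is connected, the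
      relation "f may follow e in a reduced path" is strongly connected, i.e.
      A is irreducible (every edge reaches its own reverse by a counting
      argument on the set of edges it reaches).
   2. Combinatorics: tr A^k is the sum of e^(-l(gamma)) over based circuits
      gamma with k edges.  Sorting circuits by length into unit intervals and
      using h_G(l) < 1 shows that tr A^k decays geometrically.
   3. Linear algebra: for an irreducible nonnegative matrix, decay of the
      traces of the powers gives decay of all entries of the powers, hence
      det (1 - sA) <> 0 for 0 <= s <= 1 (no nonzero v with v = s v A).
   4. The polynomial s |-> det (1 - sA) is 1 at s = 0 and has no root in
      [0, 1], so it is positive at s = 1 by the intermediate value theorem. *)

Section NonBacktrackingSteps.
Variable G : graph.

Definition follows : rel (gE G) :=
  fun e f => (gterm e == gorig f) && (f != gbar e).

Lemma gterm_bar (f : gE G) : gterm (gbar f) = gorig f.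
Proof. by rewrite -gorig_bar gbarK. Qed.

Lemma gbar_inj : injective (@gbar G).
Proof. exact: (can_inj (@gbarK G)). Qed.

Lemma follows_rev e f : follows e f -> follows (gbar f) (gbar e).
Proof.
rewrite /follows gterm_bar gorig_bar => /andP[/eqP -> ne_fe]; rewrite eqxx /=.
by apply: contra ne_fe => /eqP ->; rewrite gbarK.
Qed.

Lemma connect_follows_rev e f :
  connect follows e f -> connect follows (gbar f) (gbar e).
Proof.
move/connectP=> [p ep ->]; elim: p e ep => [|x p IHp] e /=; first by rewrite connect0.
case/andP=> ex xp; apply: connect_trans (IHp x xp) _.
exact/connect1/follows_rev.
Qed.

Lemma card_by_vertex (S : {set gE G}) (phi : gE G -> gV G) :
  #|S| = (\sum_(v : gV G) #|[set f in S | phi f == v]|)%N.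
Proof.
rewrite -sum1_card (partition_big phi predT) //=.
by apply: eq_bigr => v _; rewrite -sum1_card; apply: eq_bigl => f; rewrite inE.
Qed.

Lemma valence_finset v : valence v = #|[set e : gE G | gorig e == v]|.
Proof. by apply: eq_card => x; rewrite inE; apply/idP/idP; rewrite in_setE. Qed.

Hypothesis no_valence12 : forall v : gV G, valence v != 1%N /\ valence v != 2%N.

(* At every vertex v at most one edge of S ends
   (two would let S contain the reverse of one of them), and if one does,
   all the other (>= 2) edges leaving v follow it: so out(v) >= 2 in(v). *)
Lemma closed_set_out_in (S : {set gE G}) :
  (forall f, f \in S -> gbar f \notin S) ->
  (forall f g, f \in S -> follows f g -> g \in S) ->
  forall v, (2 * #|[set f in S | gterm f == v]| <= #|[set f in S | gorig f == v]|)%N.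
Proof.
move=> S_bar S_follows v.
have [->|[f]] := set_0Vmem [set f in S | gterm f == v]; first by rewrite cards0.
rewrite inE => /andP[fS /eqP fv].
have in_le1 : (#|[set f in S | gterm f == v]| <= 1)%N.
  rewrite -(cards1 f); apply/subset_leq_card/fintype.subsetP => f'.
  rewrite !inE => /andP[f'S /eqP f'v]; apply: contraLR (S_bar f fS) => nf; rewrite negbK.
  apply: S_follows f'S _; rewrite /follows gorig_bar f'v fv eqxx /=.
  by apply: contra nf => /eqP /gbar_inj ->.
have out_ge2 : (2 <= #|[set f in S | gorig f == v]|)%N.
  have sub : [set g | gorig g == v] :\ gbar f \subset [set f in S | gorig f == v].
    apply/fintype.subsetP => g; rewrite !inE => /andP[ng /eqP gv].
    by rewrite gv eqxx andbT; apply: S_follows fS _; rewrite /follows fv gv eqxx.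
  apply: leq_trans (subset_leq_card sub).
  have bf_out : gbar f \in [set g | gorig g == v] by rewrite inE gorig_bar fv.
  have := cardsD1 (gbar f) [set g | gorig g == v]; rewrite bf_out.
  have [val1 val2] := no_valence12 v; rewrite valence_finset in val1 val2.
  by move: val1 val2; case: #|_| => [|[|[|c]]] //; lia.
by apply: leq_trans out_ge2; rewrite -{2}(muln1 2) leq_mul2l.
Qed.

(* Every edge reaches its reverse: otherwise the edges reachable from e form a
   set as in [closed_set_out_in], and summing over vertices gives 2|S| <= |S|. *)
Lemma connect_follows_bar e : connect follows e (gbar e).
Proof.
apply/negPn/negP => unreach.
pose S := [set f | connect follows e f].
have S_bar f : f \in S -> gbar f \notin S.
  rewrite !inE => ef; apply: contra unreach => ebf.
  by apply: connect_trans ef _; have := connect_follows_rev ebf; rewrite gbarK.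
have S_follows f g : f \in S -> follows f g -> g \in S.
  by rewrite !inE => ef fg; apply: connect_trans ef (connect1 fg).
have : (2 * #|S| <= #|S|)%N.
  rewrite {1}(card_by_vertex S (@gterm G)) (card_by_vertex S (@gorig G)).
  by rewrite big_distrr /=; apply: leq_sum => v _; exact: closed_set_out_in.
have : (0 < #|S|)%N by apply/card_gt0P; exists e; rewrite inE connect0.
lia.
Qed.

Hypothesis G_connected : connected_graph G.

Lemma connect_follows e f : connect follows e f.
Proof.
have adj_step e' f' : gterm e' = gorig f' -> connect follows e' f'.
  move=> ef'; have [->|ne] := eqVneq f' (gbar e'); first exact: connect_follows_bar.
  by apply: connect1; rewrite /follows ef' eqxx ne.
move/connectP: (G_connected (gterm e) (gorig f)) => [p adj_p p_last].
elim: p e adj_p p_last => [|v p IHp] e /=; first by move=> _ /esym/adj_step.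
case/andP => /existsP[d /andP[/eqP od /eqP td]] adj_p p_last.
by apply: connect_trans (adj_step _ _ (esym od)) _; apply: IHp; rewrite td.
Qed.

End NonBacktrackingSteps.

Local Open Scope ring_scope.

Section PowerAsPathSum.
Variable R : pzRingType.

Lemma sum_tuple_cons (X : finType) k (F : k.+1.-tuple X -> R) :
  \sum_(t : k.+1.-tuple X) F t =
  \sum_(x : X) \sum_(t : k.-tuple X) F (cons_tuple x t).
Proof.
rewrite pair_big /= (reindex (fun p : X * k.-tuple X => cons_tuple p.1 p.2)) //=.
exists (fun t : k.+1.-tuple X => (thead t, behead_tuple t)) => [[x t] _|t _] /=.
  by congr pair; apply: val_inj.
by apply: val_inj => /=; case: t => -[|x s].
Qed.

Lemma sum_tuple0 (X : finType) (F : 0.-tuple X -> R) :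
  \sum_(t : 0.-tuple X) F t = F [tuple].
Proof. by rewrite (big_pred1 [tuple]) // => t /=; symmetry; apply/eqP; exact: tuple0. Qed.

Variable n : nat.
Implicit Types B : 'M[R]_n.

Lemma mxpow_entry_paths B k i j :
  (B ^+ k.+1) i j = \sum_(t : k.+1.-tuple 'I_n | tnth t ord0 == i)
     (\prod_(m < k) B (tnth t (widen_ord (leqnSn k) m)) (tnth t (lift ord0 m)))
        * B (tnth t ord_max) j.
Proof.
elim: k i j => [|k IHk] i j.
  rewrite expr1 big_mkcond /= sum_tuple_cons.
  rewrite (bigD1 i) //= [X in _ + X]big1 ?addr0; last first.
    by move=> x nx; rewrite sum_tuple0 /= (tnth_nth x) /= (negbTE nx).
  by rewrite sum_tuple0 /= !(tnth_nth i) /= eqxx big_ord0 mul1r.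
rewrite exprS mxE [in RHS]big_mkcond /= [in RHS]sum_tuple_cons.
rewrite [in RHS](bigD1 i) //= [X in _ + X]big1 ?addr0; last first.
  by move=> x nx; apply: big1 => t _; rewrite (tnth_nth x) /= (negbTE nx).
under eq_bigr do rewrite IHk big_distrr /=.
rewrite (exchange_big_dep xpredT) //=; apply: eq_bigr => t _.
rewrite (big_pred1 (tnth t ord0)); last by move=> x; rewrite /= eq_sym.
rewrite [tnth (cons_tuple i t) ord0](tnth_nth i) eqxx big_ord_recl /= mulrA.
rewrite !(tnth_nth i) /= add0n; congr (_ * _ * _); apply: eq_bigr => m _.
by rewrite !(tnth_nth i) /= !add0n.
Qed.

Lemma mxtrace_pow_cycles B k :
  \tr (B ^+ k.+1) = \sum_(t : k.+1.-tuple 'I_n)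
      \prod_(m < k.+1) B (tnth t m) (tnth t (ordS m)).
Proof.
rewrite /mxtrace; under eq_bigr do rewrite mxpow_entry_paths.
rewrite (exchange_big_dep xpredT) //=; apply: eq_bigr => t _.
rewrite (big_pred1 (tnth t ord0)); last by move=> x; rewrite /= eq_sym.
have ordS_widen (m : 'I_k) : ordS (widen_ord (leqnSn k) m) = lift ord0 m.
  by apply: val_inj; rewrite [LHS]/= modn_small // ltnS.
have ordS_max : ordS (@ord_max k) = ord0 by apply: val_inj; rewrite [LHS]/= modnn.
by rewrite big_ord_recr ordS_max; under [in RHS]eq_bigr do rewrite ordS_widen.
Qed.

End PowerAsPathSum.

Section NonnegativeMatrix.
Variables (R : numDomainType) (n : nat) (B : 'M[R]_n).
Hypothesis B_ge0 : forall i j, 0 <= B i j.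

Lemma mxpow_ge0 k i j : 0 <= (B ^+ k) i j.
Proof.
elim: k i j => [|k IHk] i j; first by rewrite expr0 mxE ler0n.
by rewrite exprS mxE; apply: sumr_ge0 => m _; apply: mulr_ge0.
Qed.

(* Going from i to j in k steps and back in r steps is one of the closed
   paths of length k + r at i. *)
Lemma mxpow_roundtrip_le k r i j :
  (B ^+ k) i j * (B ^+ r) j i <= (B ^+ (k + r)) i i.
Proof.
rewrite exprD mxE (bigD1 j) //= lerDl.
by apply: sumr_ge0 => m _; apply: mulr_ge0; apply: mxpow_ge0.
Qed.

Lemma mxpow_diag_le_trace k i : (B ^+ k) i i <= \tr (B ^+ k).
Proof.
rewrite /mxtrace (bigD1 i) //= lerDl.
by apply: sumr_ge0 => m _; apply: mxpow_ge0.
Qed.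

End NonnegativeMatrix.

Section GeometricDecay.
Variable R : realType.

Definition geom_decay (rho : R) (u : nat -> R) : Prop :=
  exists2 C : R, 0 <= C & exists K0 : nat, forall k, (K0 <= k)%N -> u k <= C * rho ^+ k.

Variable rho : R.
Hypotheses (rho_ge0 : 0 <= rho) (rho_lt1 : rho < 1).

Lemma geom_decay_lower_le0 (x : R) (u : nat -> R) :
  geom_decay rho u -> (forall k, x <= u k) -> x <= 0.
Proof.
move=> [C C_ge0 [K0 u_le]] x_le; rewrite leNgt; apply/negP => x_gt0.
have x_le' k : (K0 <= k)%N -> x <= C * rho ^+ k.
  by move=> Kk; apply: le_trans (x_le k) (u_le k Kk).
have eps_gt0 : 0 < x / (C + 1) by apply: divr_gt0 => //; lra.
have rho_norm : `|rho| < 1 by rewrite ger0_norm.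
have [N _ rhoN] := cvgr_lt _ (cvg_expr rho_norm) _ eps_gt0.
have [Nk Kk] := (leq_maxl N K0, leq_maxr N K0).
have := x_le' _ Kk; have := rhoN _ Nk; rewrite ltr_pdivlMr; last lra.
have : 0 <= rho ^+ maxn N K0 by apply: exprn_ge0.
nra.
Qed.

Lemma geom_decay_sum (I : finType) (c : I -> R) (u : I -> nat -> R) :
  (forall i, 0 <= c i) -> (forall i, geom_decay rho (u i)) ->
  geom_decay rho (fun k => \sum_i c i * u i k).
Proof.
move=> c_ge0 u_decay.
have /choice [CK CKP] : forall i, exists p : R * nat,
    0 <= p.1 /\ forall k, (p.2 <= k)%N -> u i k <= p.1 * rho ^+ k.
  by move=> i; have [C C_ge0 [K0 u_le]] := u_decay i; exists (C, K0).
exists (\sum_i c i * (CK i).1).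
  by apply: sumr_ge0 => i _; apply: mulr_ge0 => //; exact: (CKP i).1.
exists (\max_i (CK i).2)%N => k Kk.
rewrite big_distrl /=; apply: ler_sum => i _; rewrite -mulrA; apply: ler_wpM2l => //.
by apply: (CKP i).2; apply: leq_trans Kk; exact: leq_bigmax.
Qed.

Variable n : nat.

(* For an irreducible nonnegative matrix, geometric decay of the traces of
   its powers forces decay of every entry: B^k(i,j) B^r(j,i) <= tr B^(k+r). *)
Lemma mxpow_entry_decay (B : 'M[R]_n) :
  (forall i j, 0 <= B i j) -> (forall i j, exists r, 0 < (B ^+ r) i j) ->
  geom_decay rho (fun k => \tr (B ^+ k)) ->
  forall i j, geom_decay rho (fun k => (B ^+ k) i j).
Proof.
move=> B_ge0 B_irr [C C_ge0 [K0 tr_le]] i j.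
have [r Br_gt0] := B_irr j i.
exists (C / (B ^+ r) j i); first by rewrite divr_ge0 // ltW.
exists K0 => k Kk; rewrite mulrAC ler_pdivlMr //.
apply: le_trans (mxpow_roundtrip_le B_ge0 k r i j) _.
apply: le_trans (mxpow_diag_le_trace B_ge0 _ i) _.
apply: le_trans (tr_le _ (leq_trans Kk (leq_addr _ _))) _.
rewrite exprD; apply: ler_wpM2l => //.
by rewrite ler_piMr ?exprn_ge0 // exprn_ile1 // ltW.
Qed.

(* If all entries of B^k decay, then for 0 <= s <= 1 the matrix 1 - sB is
   invertible: a row vector v with v = s v B satisfies |v| <= |v| B^k
   entrywise for every k, so |v| is dominated by decaying sequences. *)
Lemma det_one_sub_ne0 (B : 'M[R]_n) :
  (forall i j, 0 <= B i j) -> (forall i j, geom_decay rho (fun k => (B ^+ k) i j)) ->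
  forall s, 0 <= s <= 1 -> \det (1%:M - s *: B) != 0.
Proof.
move=> B_ge0 B_decay s /andP[s_ge0 s_le1]; apply/negP => /det0P [v v_neq0].
rewrite mulmxBr mulmx1 -scalemxAr => /eqP; rewrite subr_eq0 => /eqP v_fixed.
pose u j := `|v 0 j|.
have u_step j : u j <= \sum_i u i * B i j.
  have v_j : v 0 j = s * \sum_i v 0 i * B i j by rewrite {1}v_fixed !mxE.
  have sum_le : `|\sum_i v 0 i * B i j| <= \sum_i u i * B i j.
    apply: le_trans (ler_norm_sum _ _ _) _; apply: ler_sum => i _.
    by rewrite normrM (ger0_norm (B_ge0 i j)).
  have := normr_ge0 (\sum_i v 0 i * B i j).
  rewrite /u v_j normrM ger0_norm //; nra.
have u_pow k j : u j <= \sum_i u i * (B ^+ k) i j.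
  elim: k j => [|k IHk] j.
    rewrite expr0 (bigD1 j) //= big1 ?addr0 ?mxE ?eqxx ?mulr1 //.
    by move=> i /negbTE nij; rewrite mxE nij mulr0.
  apply: le_trans (u_step j) _; rewrite exprSr.
  under [X in _ <= X]eq_bigr do rewrite mxE big_distrr.
  rewrite exchange_big /=; apply: ler_sum => m _.
  under [X in _ <= X]eq_bigr do rewrite mulrA.
  by rewrite -big_distrl /=; apply: ler_wpM2r => //; exact: IHk.
have v0 : v = 0.
  apply/rowP => j; rewrite mxE; apply/normr0_eq0/le_anti.
  rewrite normr_ge0 andbT; apply: (geom_decay_lower_le0 _ (u_pow^~ j)).
  by apply: geom_decay_sum => i; [exact: normr_ge0 | exact: B_decay].
by rewrite v0 eqxx in v_neq0.
Qed.

End GeometricDecay.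

(* The polynomial s |-> det (1 - sB) equals 1 at s = 0; if it has no root in
   [0, 1], the intermediate value theorem makes it positive at s = 1. *)
Lemma det_one_sub_gt0 (R : rcfType) n (B : 'M[R]_n) :
  (forall s, 0 <= s <= 1 -> \det (1%:M - s *: B) != 0) -> 0 < \det (1%:M - B).
Proof.
move=> no_root.
pose P : 'M[{poly R}]_n := \matrix_(i, j) ((i == j)%:R%:P - 'X * (B i j)%:P).
have P_eval s : (\det P).[s] = \det (1%:M - s *: B).
  rewrite -[(\det P).[s]]/(horner_eval s (\det P)) -det_map_mx; congr (\det _).
  by apply/matrixP => i j; rewrite !mxE /= horner_evalE !hornerE; case: (i == j).
rewrite -[B]scale1r -P_eval ltNge; apply/negP => P1_le0.
have [x /andP[x_ge0 x_le1]] : exists2 x, 0 <= x <= 1 & root (- \det P) x.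
  apply: poly_ivt; first exact: ler01.
  by rewrite !hornerN P_eval scale0r subr0 det1 oppr_le0 ler01 /= oppr_ge0.
by rewrite rootN /root P_eval; apply/negP/no_root/andP.
Qed.

Lemma expR_bucket (R : realType) (a x : R) (J : nat) : a < x <= a + J%:R ->
  expR (- x) <= \sum_(j < J)
    (if (a + j%:R < x) && (x <= a + j%:R + 1) then expR (- (a + j%:R)) else 0).
Proof.
case/andP; case: J => [|J] a_x x_le; first by move: x_le; rewrite addr0; lra.
have x_leJ : x <= a + J%:R + 1 by rewrite -natr1 addrA in x_le.
case: (@ex_minnP (fun j : nat => x <= a + j%:R + 1)); first by exists J.
move=> j x_le_j j_min; have jJ : (j < J.+1)%N := j_min J x_leJ.
have a_j : a + j%:R < x.
  move: x_le_j j_min {jJ}; case: j => [|j] _ j_min; first by rewrite addr0.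
  by rewrite -natr1 addrA ltNge; apply/negP => /j_min; rewrite ltnn.
rewrite (bigD1 (Ordinal jJ)) //= a_j x_le_j /=.
have : 0 <= \sum_(i < J.+1 | i != Ordinal jJ)
    (if (a + i%:R < x) && (x <= a + i%:R + 1) then expR (- (a + i%:R)) else 0).
  by apply: sumr_ge0 => i _; case: ifP => // _; exact/ltW/expR_gt0.
have : expR (- x) <= expR (- (a + j%:R)) by rewrite ler_expR; lra.
lra.
Qed.

Section CircuitMatrix.
Variables (R : realType) (G : graph) (l : gE G -> R).

Lemma A_Gl_follows i j :
  A_Gl l i j = (follows (eidx i) (eidx j))%:R * expR (- l (eidx i)).
Proof. by rewrite /A_Gl /A_G !mxE /follows; case: (_ && _). Qed.

Lemma A_Gl_ge0 i j : 0 <= A_Gl l i j.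
Proof. by rewrite A_Gl_follows mulr_ge0 ?ler0n // ltW // expR_gt0. Qed.

Definition circuit_sum k : R :=
  \sum_(s : k.+1.-tuple (gE G) | based_circuit s) expR (- path_length l s).

Lemma cycle_weight k (s : k.+1.-tuple (gE G)) :
  \prod_(m < k.+1) ((follows (tnth s m) (tnth s (ordS m)))%:R * expR (- l (tnth s m)))
  = if based_circuit s then expR (- path_length l s) else 0.
Proof.
rewrite big_split /= /path_length -sumrN expR_sum; case: ifP => [circ|/negbT].
  by rewrite big1 ?mul1r // => m _; move/forallP: circ => /(_ m); rewrite /follows => ->.
by move=> /forallPn [m not_follows]; rewrite (bigD1 m) //= /follows (negbTE not_follows) !mul0r.
Qed.

Lemma trace_A_Gl_pow k : \tr (A_Gl l ^+ k.+1) = circuit_sum k.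
Proof.
rewrite mxtrace_pow_cycles /circuit_sum [RHS]big_mkcond /=.
rewrite (reindex (fun t : k.+1.-tuple 'I_#|gE G| => map_tuple (@eidx G) t)) /=.
  by apply: eq_bigr => t _; rewrite -cycle_weight; apply: eq_bigr => m _;
     rewrite A_Gl_follows !tnth_map.
exists (fun s : k.+1.-tuple (gE G) => map_tuple (@enum_rank (gE G)) s) => t _;
  by apply: eq_from_tnth => m; rewrite !tnth_map /eidx ?enum_valK ?enum_rankK.
Qed.

Lemma A_Gl_pow_connect e f : connect (@follows G) e f ->
  exists r, 0 < (A_Gl l ^+ r) (enum_rank e) (enum_rank f).
Proof.
move/connectP=> [p p_path ->]; elim: p e p_path => [|g p IHp] e /=.
  by exists 0%N; rewrite expr0 mxE eqxx ltr01.
case/andP => eg g_path; have [r Ar_gt0] := IHp g g_path.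
exists r.+1; rewrite exprS mxE (bigD1 (enum_rank g)) //=.
have A_eg : 0 < A_Gl l (enum_rank e) (enum_rank g).
  by rewrite A_Gl_follows /eidx !enum_rankK eg mul1r expR_gt0.
have rest_ge0 : 0 <= \sum_(i < #|gE G| | i != enum_rank g)
    A_Gl l (enum_rank e) i * (A_Gl l ^+ r) i (enum_rank (last g p)).
  by apply: sumr_ge0 => i _; apply: mulr_ge0; [exact: A_Gl_ge0 | apply: mxpow_ge0 => ??; exact: A_Gl_ge0].
have := mulr_gt0 A_eg Ar_gt0; lra.
Qed.

Hypothesis l_length : length_fun l.

Lemma length_lower_bound : exists2 m0 : R, 0 < m0 & forall e, m0 <= l e.
Proof.
have l_gt0 := l_length.1.
have inv_ge0 : 0 <= \sum_e (l e)^-1 by apply: sumr_ge0 => e _; rewrite invr_ge0 ltW.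
exists (1 + \sum_e (l e)^-1)^-1; first by rewrite invr_gt0; lra.
move=> e; rewrite -[X in _ <= X]invrK lef_pV2 ?posrE ?invr_gt0 //; last lra.
rewrite (bigD1 e) //=.
have : 0 <= \sum_(i | i != e) (l i)^-1 by apply: sumr_ge0 => i _; rewrite invr_ge0 ltW.
lra.
Qed.

Lemma length_upper_bound : exists D : nat, forall e, l e <= D%:R.
Proof.
have l_gt0 := l_length.1.
have sum_ge0 : 0 <= \sum_e l e by apply: sumr_ge0 => e _; rewrite ltW.
exists (Num.Def.archi_bound (\sum_e l e)) => e.
apply: le_trans (ltW (archi_boundP sum_ge0)).
rewrite (bigD1 e) //=.
have : 0 <= \sum_(i | i != e) l i by apply: sumr_ge0 => i _; rewrite ltW.
lra.
Qed.

Lemma path_length_ge (m0 : R) k (s : k.+1.-tuple (gE G)) :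
  (forall e, m0 <= l e) -> (k.+1)%:R * m0 <= path_length l s.
Proof.
move=> m0_le; rewrite mulr_natl -[X in m0 *+ X](card_ord k.+1) -sumr_const.
by apply: ler_sum => i _.
Qed.

Lemma path_length_le (D : nat) k (s : k.+1.-tuple (gE G)) :
  (forall e, l e <= D%:R) -> path_length l s <= (k.+1 * D)%:R.
Proof.
move=> le_D; rewrite natrM mulr_natl -[X in _ *+ X](card_ord k.+1) -sumr_const.
by apply: ler_sum => i _.
Qed.

Lemma count_circuits_finset t k : count_circuits l t k =
  #|[set s : k.+1.-tuple (gE G) | based_circuit s && (path_length l s <= t)]|.
Proof. by apply: eq_card => x; rewrite inE; apply/idP/idP; rewrite in_setE. Qed.

(* Circuits with k+1 edges have length >= (k+1) m0: few edges, short lengths. *)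
Lemma count_circuits_short (m0 t : R) k : (forall e, m0 <= l e) ->
  t < (k.+1)%:R * m0 -> count_circuits l t k = 0%N.
Proof.
move=> m0_le t_lt; rewrite count_circuits_finset; apply/eqP; rewrite cards_eq0.
apply/eqP/setP => s; rewrite !inE; apply/negbTE/negP => /andP[_ s_le].
by have := path_length_ge s m0_le; lra.
Qed.

Lemma num_circuits_partial t : exists K, forall M, (K <= M)%N ->
  num_circuits l t = \sum_(n < M) (count_circuits l t n)%:R.
Proof.
have [m0 m0_gt0 m0_le] := length_lower_bound.
pose K := Num.Def.archi_bound (`|t| / m0).
have t_lt : t < K%:R * m0.
  have := archi_boundP (divr_ge0 (normr_ge0 t) (ltW m0_gt0)).
  by rewrite -/K ltr_pdivrMr // => /(le_lt_trans (ler_norm t)).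
have partial_cst M : (K <= M)%N ->
    \sum_(n < M) (count_circuits l t n)%:R = \sum_(n < K) (count_circuits l t n)%:R :> R.
  elim: M => [|M IHM]; first by rewrite leqn0 => /eqP ->.
  rewrite leq_eqVlt => /orP[/eqP -> //|]; rewrite ltnS => KM.
  rewrite big_ord_recr /= (count_circuits_short m0_le) ?addr0; first exact: IHM.
  apply: lt_le_trans t_lt _; rewrite ler_pM2r // ler_nat; lia.
exists K => M KM; rewrite (partial_cst M KM).
by apply: norm_lim_near_cst; exists K => // M' /= KM'; exact: partial_cst.
Qed.

Lemma count_le_num_circuits t k : (count_circuits l t k)%:R <= num_circuits l t.
Proof.
have [K num_eq] := num_circuits_partial t; rewrite (num_eq (maxn K k.+1)) ?leq_maxl //.
have k_lt : (k < maxn K k.+1)%N by rewrite leq_max ltnSn orbT.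
rewrite (bigD1 (Ordinal k_lt)) //= lerDl; apply: sumr_ge0 => i _; exact: ler0n.
Qed.

Lemma circuit_sum_buckets (a : R) (J : nat) k :
  (forall s : k.+1.-tuple (gE G), based_circuit s -> a < path_length l s <= a + J%:R) ->
  circuit_sum k <=
    \sum_(j < J) expR (- (a + j%:R)) * (count_circuits l (a + j%:R + 1) k)%:R.
Proof.
move=> lengths; pose in_bucket (s : k.+1.-tuple (gE G)) (j : 'I_J) :=
  (a + j%:R < path_length l s) && (path_length l s <= a + j%:R + 1).
have bucketed : circuit_sum k <= \sum_(s | based_circuit s) \sum_(j < J)
    (if in_bucket s j then expR (- (a + j%:R)) else 0).
  by apply: ler_sum => s /lengths; exact: expR_bucket.
apply: le_trans bucketed _; rewrite exchange_big /=; apply: ler_sum => j _.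
rewrite count_circuits_finset -sum1_card natr_sum big_distrr /=.
rewrite big_mkcond [X in _ <= X]big_mkcond /=; apply: ler_sum => s _; rewrite inE.
case: (based_circuit s) => //=; rewrite /in_bucket.
case: ifP => [/andP[_ ->]|_]; first by rewrite mulr1.
by case: ifP => _; rewrite ?mulr1 ?mulr0 // ltW // expR_gt0.
Qed.

Variable h : R.
Hypothesis l_entropy : is_entropy l h.

Lemma num_circuits_le_expR h' : h < h' ->
  exists2 T : R, 0 < T & forall t : R, T < t -> num_circuits l t <= expR (h' * t).
Proof.
move=> h_lt; have [M [_ M_bound]] := cvgr_lt _ l_entropy _ h_lt.
exists (Num.max M 1); first by rewrite lt_max ltr01 orbT.
move=> t; rewrite gt_max => /andP[Mt t_gt1].
have := M_bound t Mt; rewrite ltr_pdivrMr; last lra.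
have [num_gt0 ln_lt|num_le0 _] := ltP 0 (num_circuits l t).
  by rewrite -(lnK num_gt0) ler_expR ltW.
exact: le_trans num_le0 (ltW (expR_gt0 _)).
Qed.

Lemma geometric_sum_le (q : R) (J : nat) : 0 <= q -> q < 1 ->
  \sum_(j < J) q ^+ j <= (1 - q)^-1.
Proof.
move=> q_ge0 q_lt1; have := subrX1 q J; have := exprn_ge0 J q_ge0.
rewrite -[(1 - q)^-1]mul1r ler_pdivlMr; last lra.
set S := \sum_(i < J) q ^+ i; nra.
Qed.

Hypothesis h_lt1 : h < 1.

(* With h < h' < 1, m0 <= l and a = (k+1) m0 - 1,
   the bucket j contributes at most e^(-(a+j)) e^(h'(a+j+1)), which is
   e * rho^(k+1) * q^j with rho = e^(-(1-h') m0) and q = e^(-(1-h')). *)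
Lemma trace_A_Gl_decay : exists2 rho : R, 0 <= rho < 1 &
  geom_decay rho (fun k => \tr (A_Gl l ^+ k)).
Proof.
pose h' := (h + 1) / 2; have h_h' : h < h' by move: h_lt1; rewrite /h'; lra.
have h'_lt1 : h' < 1 by move: h_lt1; rewrite /h'; lra.
have [T T_gt0 num_le] := num_circuits_le_expR h_h'.
have [m0 m0_gt0 m0_le] := length_lower_bound; have [D le_D] := length_upper_bound.
pose q := expR (- (1 - h')); pose rho := expR (- (1 - h') * m0).
have q_lt1 : q < 1 by rewrite /q -[X in _ < X]expR0 ltr_expR; lra.
have rho_lt1 : rho < 1 by rewrite /rho -[X in _ < X]expR0 ltr_expR; nra.
pose K0 := Num.Def.archi_bound (T / m0).
have T_lt : T < K0%:R * m0.
  by rewrite -ltr_pdivrMr //; apply: archi_boundP; rewrite divr_ge0 // ltW.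
exists rho; first by rewrite ltW ?expR_gt0.
exists (expR 1 / (1 - q)); first by rewrite divr_ge0 ?expR_ge0 //; lra.
exists K0.+1 => -[//|k] /= Kk; rewrite trace_A_Gl_pow.
pose a := (k.+1)%:R * m0 - 1.
have T_a : T < a + 1.
  apply: (lt_le_trans T_lt); rewrite /a addrNK ler_pM2r // ler_nat; lia.
apply: le_trans (circuit_sum_buckets (a := a) (J := (k.+1 * D).+1) _) _.
  move=> s _; have := path_length_ge s m0_le; have := path_length_le s le_D.
  have : 0 <= (k.+1)%:R * m0 by rewrite mulr_ge0 ?ler0n ?ltW.
  by rewrite /a -natr1; lra.
have bucket_le (j : nat) :
    expR (- (a + j%:R)) * (count_circuits l (a + j%:R + 1) k)%:R
    <= expR 1 * rho ^+ k.+1 * q ^+ j.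
  have count_le : (count_circuits l (a + j%:R + 1) k)%:R <= expR (h' * (a + j%:R + 1)).
    apply: le_trans (count_le_num_circuits _ _) (num_le _ _).
    by have := ler0n R j; lra.
  apply: le_trans (ler_wpM2l (ltW (expR_gt0 _)) count_le) _.
  rewrite /rho /q -!expRM_natl -!expRD le_eqVlt; apply/orP; left; apply/eqP.
  by congr expR; rewrite /a; ring.
apply: le_trans (ler_sum _ (fun (j : 'I__) _ => bucket_le j)) _.
rewrite -big_distrr /= [X in _ <= X]mulrAC; apply: ler_wpM2l.
  by rewrite mulr_ge0 ?exprn_ge0 ?expR_ge0.
exact: geometric_sum_le (ltW (expR_gt0 _)) q_lt1.
Qed.

End CircuitMatrix.

Unset Implicit Arguments.

Theorem mainTheorem8 (R : realType) (G : graph) (l : gE G -> R) (h : R) :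
  connected_graph G ->
  euler_char G < 0 ->
  (forall v : gV G, valence v != 1%N /\ valence v != 2%N) ->
  length_fun l ->
  is_entropy l h ->
  h < 1 ->
  0 < F_G l.
Proof.
move=> G_connected _ no_valence12 l_length l_entropy h_lt1.
have [rho /andP[rho_ge0 rho_lt1] trace_decay] := trace_A_Gl_decay l_length l_entropy h_lt1.
have A_irreducible i j : exists r, 0 < (A_Gl l ^+ r) i j.
  have := A_Gl_pow_connect l (connect_follows no_valence12 G_connected (eidx i) (eidx j)).
  by rewrite /eidx !enum_valK.
have A_ge0 := @A_Gl_ge0 R G l.
have entry_decay := mxpow_entry_decay rho_ge0 rho_lt1 A_ge0 A_irreducible trace_decay.
exact/det_one_sub_gt0/(det_one_sub_ne0 rho_ge0 rho_lt1 A_ge0 entry_decay).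
Qed.
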